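(* Let $m$ be a positive integer divisible by $3$, and for $z\in\{0,1\}$ let $\mathcal G_z$ be the uniform distribution over $\textsc{GapMaj}_m^{-1}(z)$. For every conjunction $C\colon\{0,1\}^m\to\{0,1\}$ of width $w\le m/7$ and each $z\in\{0,1\}$, $C(\mathcal G_z)\le 3^w\cdot C(\mathcal G_{1-z})$.
   Context: $\textsc{GapMaj}_m\colon\{0,1\}^m\to\{0,1\}$ is the partial function with value $0$ on inputs of Hamming weight $m/3$ and value $1$ on inputs of Hamming weight $2m/3$ (undefined otherwise). A conjunction is an AND of literals; its width is its number of literals. For a conjunction $C$ and distribution $\mathcal D$, $C(\mathcal D)=\Pr_{x\sim\mathcal D}[C(x)=1]$. *)

From mathcomp Require Import all_boot all_order all_algebra.
Set Implicit Arguments. Unset Strict Implicit. Unset Printing Implicit Defensive.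
Import GRing.Theory Num.Theory.

(* Inputs in {0,1}^m are boolean finite functions 'I_m -> bool (true = 1). *)
Definition hw (m : nat) (x : {ffun 'I_m -> bool}) : nat := #|[set i | x i]|.

Definition gapmaj_preimage (m : nat) (z : bool) : {set {ffun 'I_m -> bool}} :=
  [set x | hw x == (if z then (2 * m) %/ 3 else m %/ 3)].

(* A literal is a pair (i, b): it is satisfied by x iff x i = b
   (b = true: the positive literal x_i; b = false: the negated literal ~x_i). *)
Definition conjunction (m : nat) := {set ('I_m * bool)}.
Definition width (m : nat) (C : conjunction m) : nat := #|C|.
Definition conj_eval (m : nat) (C : conjunction m) (x : {ffun 'I_m -> bool}) : bool :=
  [forall l in C, x l.1 == l.2].

Definition unif_prob (m : nat) (C : conjunction m) (S : {set {ffun 'I_m -> bool}}) : rat :=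
  (#|[set x in S | conj_eval C x]|)%:R / (#|S|)%:R.

Definition accept_prob (m : nat) (C : conjunction m) (z : bool) : rat :=
  unif_prob C (gapmaj_preimage m z).

(* Write m = 3k and let a consistent conjunction fix p variables to 1 and q to 0,
   so w = p + q.  An input of weight K satisfying it is determined by the ones among
   the 3k - w free variables, hence G_0 and G_1 accept it with probabilities
   C(3k-w, k-p)/C(3k,k) and C(3k-w, 2k-p)/C(3k,2k) = C(3k-w, k-q)/C(3k,k).
   Raising q by one (which lowers n = 3k-p-q by one) multiplies the ratio
   C(n, k-p)/C(n, k-q) by exactly (2k-q)/(k-q), which is at most 3 while 2q <= k;
   at q = 0 the ratio is at most 1 by unimodality.  So the ratio is at most
   3^q <= 3^w, and symmetrically with p and q exchanged.  An inconsistent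
   conjunction is accepted by no input. *)

From mathcomp Require Import all_boot all_order all_algebra.
From mathcomp Require Import zify.
Set Implicit Arguments. Unset Strict Implicit. Unset Printing Implicit Defensive.
Import GRing.Theory Num.Theory.

Lemma leq_binS n j : 2 * j < n -> 'C(n, j) <= 'C(n, j.+1).
Proof.
move=> lt_jn; rewrite -(leq_pmul2l (ltn0Sn j)) mul_bin_left.
by apply: leq_mul => //; lia.
Qed.

Lemma leq_bin_center n a b : a <= b -> a + b <= n -> 'C(n, a) <= 'C(n, b).
Proof.
move=> le_ab le_abn.
wlog le_bn : b le_ab le_abn / 2 * b <= n.
  move=> hwlog; have [|lt_nb] := leqP (2 * b) n; first exact: hwlog.
  by rewrite -[X in _ <= X]bin_sub; [apply: hwlog; lia | lia].
elim: b le_ab le_abn le_bn => [|b IH]; first by rewrite leqn0 => /eqP ->.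
rewrite leq_eqVlt => /orP[/eqP -> // | lt_ab] le_abn le_bn.
by apply: leq_trans (IH _ _ _) (leq_binS _); lia.
Qed.

Lemma leq_bin_gap k p q : 2 * q <= k -> p + q <= k ->
  'C(3 * k - (p + q), k - p) <= 3 ^ q * 'C(3 * k - (p + q), k - q).
Proof.
elim: q => [|q IH] le_qk le_pqk.
  by rewrite addn0 subn0 mul1n; apply: leq_bin_center; lia.
have {IH} := IH ltac:(lia) ltac:(lia).
move En : (3 * k - (p + q)) => n IH.
have -> : 3 * k - (p + q.+1) = n.-1 by lia.
have -> : k - q.+1 = (k - q).-1 by lia.
have n_gt0 : 0 < n by lia.
rewrite -(leq_pmul2l n_gt0) mul_bin_down mulnCA mul_bin_diag prednK; last by lia.
have -> : n - (k - p) = 2 * k - q by lia.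
apply: leq_trans (leq_mul (leqnn _) IH) _.
rewrite expnS mulnCA -mulnA [3 * _]mulnCA leq_pmul2l ?expn_gt0 // mulnA leq_mul2r.
by apply/orP; right; lia.
Qed.

Definition ones {T : finType} (x : {ffun T -> bool}) : {set T} := [set i | x i].

Section Ones.
Variable T : finType.

Lemma ones_bij : bijective (@ones T).
Proof.
exists (fun S : {set T} => [ffun i => i \in S]) => [x | S].
  by apply/ffunP => i; rewrite ffunE inE.
by apply/setP => i; rewrite inE ffunE.
Qed.

Lemma card_preim_ones (A : {set {set T}}) : #|ones @^-1: A| = #|A|.
Proof. exact: on_card_preimset (onW_bij _ ones_bij). Qed.

Lemma card_draws_between (P U : {set T}) k : P \subset U -> #|P| <= k ->
  #|[set S : {set T} | [&& P \subset S, S \subset U & #|S| == k]]|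
    = 'C(#|U :\: P|, k - #|P|).
Proof.
move=> sPU le_Pk; rewrite -cards_draws.
have UPK (A : {set T}) : [disjoint A & P] -> (P :|: A) :\: P = A.
  by move=> dAP; rewrite setDUl setDv set0U; apply/setDidPl.
rewrite -[RHS](@card_in_imset _ _ (setU P)); last first.
  move=> A B; rewrite !inE !subsetD => /andP[/andP[_ dA] _] /andP[/andP[_ dB] _] eqAB.
  by rewrite -(UPK A) // eqAB UPK.
apply: eq_card => S; rewrite inE; apply/and3P/imsetP.
  case=> sPS sSU /eqP cardS; exists (S :\: P).
    by rewrite inE setSD //= cardsDS // cardS.
  by rewrite -{1}(setID S P) (setIidPr sPS).
case=> A; rewrite inE subsetD => /andP[/andP[sAU dAP] /eqP cardA] ->.
rewrite subsetUl subUset sPU sAU cardsU.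
by rewrite setIC (disjoint_setI0 dAP) cards0 subn0 cardA subnKC.
Qed.
End Ones.

Section Conjunction.
Variable m : nat.
Implicit Types (C : conjunction m) (x : {ffun 'I_m -> bool}).

Definition pos_vars C : {set 'I_m} := [set i | (i, true) \in C].
Definition neg_vars C : {set 'I_m} := [set i | (i, false) \in C].

Lemma conj_evalE C x :
  conj_eval C x = (pos_vars C \subset ones x) && (ones x \subset ~: neg_vars C).
Proof.
apply/forallP/andP => [sat | [sPx sxN] [i b]].
  split; apply/subsetP => i; rewrite !inE.
    by move=> iC; have := sat (i, true); rewrite iC => /eqP.
  by apply: contraTN => iC; have := sat (i, false); rewrite iC => /eqP ->.
apply/implyP; case: b => iC /=.
  by have := subsetP sPx i; rewrite !inE iC => ->.
by have := subsetP sxN i; rewrite !inE iC; case: (x i) => // /(_ isT).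
Qed.

Lemma card_lits C b : #|[set i | (i, b) \in C]| = #|[set l in C | l.2 == b]|.
Proof.
rewrite -(card_imset _ (can_inj (g := fst) (fun i : 'I_m => erefl : (i, b).1 = i))).
apply: eq_card => -[i c]; rewrite inE /=; apply/imsetP/andP => [[j] | [iC /eqP <-]].
  by rewrite inE => jC [-> ->].
by exists i; rewrite ?inE.
Qed.

Lemma card_conjunction C : #|C| = #|pos_vars C| + #|neg_vars C|.
Proof.
rewrite /pos_vars /neg_vars !card_lits -(cardsID [set l | l.2] C).
by congr (_ + _); apply: eq_card => -[i []]; rewrite !inE /= ?andbT ?andbF.
Qed.

Lemma card_weight K : #|[set x : {ffun 'I_m -> bool} | hw x == K]| = 'C(m, K).
Proof.
have -> : [set x | hw x == K] = ones @^-1: [set S : {set 'I_m} | #|S| == K].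
  by apply/setP => x; rewrite !inE.
by rewrite card_preim_ones card_draws card_ord.
Qed.

Lemma card_weight_conj C K : pos_vars C \subset ~: neg_vars C -> #|pos_vars C| <= K ->
  #|[set x : {ffun 'I_m -> bool} | (hw x == K) && conj_eval C x]|
    = 'C(m - #|C|, K - #|pos_vars C|).
Proof.
move=> consC le_PK.
have -> : [set x | (hw x == K) && conj_eval C x] = ones @^-1:
    [set S : {set 'I_m} | [&& pos_vars C \subset S, S \subset ~: neg_vars C & #|S| == K]].
  by apply/setP => x; rewrite !inE conj_evalE andbC andbA.
rewrite card_preim_ones card_draws_between // cardsDS //.
by rewrite cardsCs setCK card_ord card_conjunction addnC subnDA.
Qed.

Lemma conj_eval_inconsistent C x :
  ~~ (pos_vars C \subset ~: neg_vars C) -> conj_eval C x = false.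
Proof.
by rewrite conj_evalE; apply: contraNF => /andP[sPx sxN]; apply: subset_trans sxN.
Qed.

End Conjunction.

Local Open Scope ring_scope.

Lemma accept_prob_inconsistent m (C : conjunction m) z :
  ~~ (pos_vars C \subset ~: neg_vars C) -> accept_prob C z = 0.
Proof.
move=> inconsC; rewrite /accept_prob /unif_prob (_ : #|_| = 0%N) ?mul0r //.
by apply: eq_card0 => x; rewrite inE conj_eval_inconsistent ?andbF.
Qed.

Lemma accept_prob_thirds m k (C : conjunction m) z : m = (3 * k)%N ->
  pos_vars C \subset ~: neg_vars C -> (#|C| <= k)%N ->
  accept_prob C z =
    'C(m - #|C|, k - #|if z then neg_vars C else pos_vars C|)%:R / 'C(m, k)%:R.
Proof.
move=> mk consC le_Ck.
have weight_z b : (if b then (2 * m) %/ 3 else m %/ 3)%N = (if b then 2 * k else k)%N.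
  by rewrite mk; case: b; [rewrite mulnCA mulKn | rewrite mulKn].
rewrite /accept_prob /unif_prob /gapmaj_preimage weight_z card_weight.
rewrite (_ : [set x in _ | _] =
    [set x | (hw x == if z then 2 * k else k)%N && conj_eval C x]); last first.
  by apply/setP => x; rewrite !inE.
have cardC := card_conjunction C.
rewrite card_weight_conj //; last by case: z; lia.
case: z => //=.
have -> : 'C(m - #|C|, 2 * k - #|pos_vars C|) = 'C(m - #|C|, k - #|neg_vars C|).
  by rewrite -[RHS]bin_sub; [congr 'C(_, _) |]; lia.
by rewrite (_ : 'C(m, 2 * k) = 'C(m, k)) // -[RHS]bin_sub; [congr 'C(_, _) |]; lia.
Qed.

Theorem fact2p2 (m : nat) (hm0 : (0 < m)%N) (hm3 : (3 %| m)%N)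
    (C : conjunction m) (hw : (7 * width C <= m)%N) (z : bool) :
  accept_prob C z <= (3 : rat) ^+ width C * accept_prob C (~~ z).
Proof.
have [consC | inconsC] := boolP (pos_vars C \subset ~: neg_vars C); last first.
  by rewrite !accept_prob_inconsistent // mulr0.
have [k mk] : exists k, m = (3 * k)%N by case/dvdnP: hm3 => k ->; exists k; rewrite mulnC.
move: hw; rewrite /width => le_wm.
have le_Ck : (#|C| <= k)%N by lia.
rewrite !(accept_prob_thirds _ mk) //.
rewrite mulrA ler_wpM2r ?invr_ge0 ?ler0n // -natrX -natrM ler_nat.
have := card_conjunction C.
set p := #|pos_vars C|; set q := #|neg_vars C|; set w := #|C| => cardC.
have -> : (m - w = 3 * k - (p + q))%N by lia.
have raise r c : (r <= w -> 3 ^ r * c <= 3 ^ w * c)%N.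
  by move=> le_rw; rewrite leq_mul2r leq_pexp2l ?orbT.
case: z => /=.
  by rewrite addnC; apply: leq_trans (leq_bin_gap _ _) (raise _ _ _); lia.
by apply: leq_trans (leq_bin_gap _ _) (raise _ _ _); lia.
Qed.
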